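(* Let $q$ be a power of a prime $p$, let $k$ be an algebraically closed field of characteristic $p$, let $G=\mathrm{GL}_n(k)$ and $\mathfrak{g}=\mathfrak{gl}_n(k)$. Let $F:G\to G$ be the Frobenius endomorphism $F((g_{i,j}))=\big((g^q_{n+1-j,\,n+1-i})\big)^{-1}$ (the inverse of the matrix whose $(i,j)$ entry is $g_{n+1-j,n+1-i}^q$), and let $F:\mathfrak{g}\to\mathfrak{g}$ be given by $F((x_{i,j}))=(x^q_{n+1-j,\,n+1-i})$. Let $\alpha\in\mathbb{F}_{q^2}\setminus\mathbb{F}_q$ (viewed inside $k$). Then the map $s:G_{\mathrm{uni}}\to\mathfrak{g}_{\mathrm{nil}}$, $s(g)=(g-1)(\alpha-\alpha^q g)^{-1}$, is a $G$-equivariant (for conjugation on $G_{\mathrm{uni}}$ and the adjoint action on $\mathfrak{g}_{\mathrm{nil}}$) bijective morphism of varieties, with inverse $s^{-1}(x)=(1+\alpha^q x)^{-1}(\alpha x+1)$, and it satisfies $s(F(g))=F(s(g))$ for all $g\in G_{\mathrm{uni}}$.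
   Context: $G_{\mathrm{uni}}$ denotes the variety of unipotent elements of $G$ and $\mathfrak{g}_{\mathrm{nil}}$ the variety of nilpotent elements of $\mathfrak{g}$. *)

From HB Require Import structures.
From mathcomp Require Import all_boot all_order all_algebra.
Set Implicit Arguments. Unset Strict Implicit. Unset Printing Implicit Defensive.
Import GRing.Theory.
Local Open Scope ring_scope.

Definition mx_nilpotent (R : pzRingType) (n : nat) (x : 'M[R]_n) : Prop :=
  exists m : nat, x ^+ m = 0.

Definition mx_unipotent (R : comUnitRingType) (n : nat) (g : 'M[R]_n) : Prop :=
  g \in unitmx /\ mx_nilpotent (g - 1%:M).

Definition frob_lie (R : pzRingType) (n q : nat) (x : 'M[R]_n) : 'M[R]_n :=
  \matrix_(i, j) (x (rev_ord j) (rev_ord i)) ^+ q.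

Definition frob_grp (R : comUnitRingType) (n q : nat) (g : 'M[R]_n) : 'M[R]_n :=
  invmx (frob_lie q g).

Definition s_map (R : comUnitRingType) (n q : nat) (alpha : R) (g : 'M[R]_n)
  : 'M[R]_n :=
  (g - 1%:M) *m invmx (alpha%:M - (alpha ^+ q) *: g).

Definition s_inv (R : comUnitRingType) (n q : nat) (alpha : R) (x : 'M[R]_n)
  : 'M[R]_n :=
  invmx (1%:M + (alpha ^+ q) *: x) *m (alpha *: x + 1%:M).

(* Polynomial functions in the matrix entries: the regular functions on
   affine space M_n(k); a map defined on a closed subvariety V is a morphism
   iff its coordinates agree on V with such polynomial functions. *)
Inductive polyfun (R : pzRingType) (n : nat) : ('M[R]_n -> R) -> Prop :=
| pf_const (c : R) : polyfun (fun _ => c)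
| pf_coord (i j : 'I_n) : polyfun (fun x => x i j)
| pf_add f g : polyfun f -> polyfun g -> polyfun (fun x => f x + g x)
| pf_mul f g : polyfun f -> polyfun g -> polyfun (fun x => f x * g x).

From HB Require Import structures.
From mathcomp Require Import all_boot all_order all_algebra ring.
From Stdlib Require Import FunctionalExtensionality.
Set Implicit Arguments.
Unset Strict Implicit.
Unset Printing Implicit Defensive.
Import GRing.Theory.
Local Open Scope ring_scope.

(* Write [beta = alpha^q] and [s = s_{alpha,beta}], where
   [s_{a,b}(g) = (g - 1)(a - b g)^-1] is a Moebius transformation of [g].
   For [g] unipotent, [a - b g = (a - b) + b (1 - g)] is a nonzero scalar plus
   a nilpotent commuting with [g], so its inverse is a truncated geometric
   series in [g - 1]: thus [s] is polynomial on [G_uni], [s g] is nilpotent,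
   and the inverse Moebius transformation inverts [s].  The Lie algebra
   Frobenius is a ring anti-automorphism, giving [F (s_{a,b} g) =
   s_{a^q,b^q} (F g)], while inverting the argument swaps the parameters:
   [s_{a,b} (g^-1) = s_{b,a} g].  As [beta^q = alpha], both sides of
   [s (F g) = F (s g)] equal [s_{beta,alpha}] of [(g_{n+1-j,n+1-i}^q)]. *)

Lemma mulmx1_invmx (R : comUnitRingType) n (A B : 'M[R]_n) :
  A *m B = 1%:M -> invmx A = B.
Proof.
by move=> AB; have [Au _] := mulmx1_unit AB; rewrite -[RHS](mulKmx Au) AB mulmx1.
Qed.

Lemma invmx_conj (R : comUnitRingType) n (h A : 'M[R]_n) :
  h \in unitmx -> invmx (h *m A *m invmx h) = h *m invmx A *m invmx h.
Proof.
move=> hu; have [Au | nAu] := boolP (A \in unitmx).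
  apply: mulmx1_invmx.
  by rewrite !mulmxA mulmxKV // mulmxK // mulmxV.
by rewrite (invmx_out nAu) invmx_out // inE /= !unitmx_mul (negbTE nAu) andbF.
Qed.

Section NilpotentMx.
Variables (F : fieldType) (n : nat).
Implicit Types (A B N : 'M[F]_n) (c : F).

Lemma mx_nilpotent_pow_size N : mx_nilpotent N -> N ^+ n = 0.
Proof.
case: n N => [|n'] N [m Nm]; first by apply/matrixP => -[].
have : horner_mx N (('X - 0%:P) ^+ m) = 0 by rewrite subr0 rmorphXn /= horner_mx_X.
move/mxminpoly_min/dvdp_exp_XsubCP => [d _].
rewrite eqp_monic ?mxminpoly_monic ?monic_exp ?monicXsubC // => /eqP minN.
have le_d_n : (d <= n'.+1)%N.
  have := dvdp_leq (monic_neq0 (char_poly_monic N)) (mxminpoly_dvd_char N).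
  by rewrite minN size_char_poly subr0 size_polyXn.
have := mx_root_minpoly N; rewrite minN subr0 rmorphXn /= horner_mx_X => Nd.
by rewrite -[X in N ^+ X](subnK le_d_n) exprD Nd mulr0.
Qed.

Lemma exprZmx c N m : (c *: N) ^+ m = c ^+ m *: N ^+ m.
Proof.
elim: m => [|m IHm]; first by rewrite !expr0 scale1r.
by rewrite !exprS -!mulmxE IHm -scalemxAl -scalemxAr scalerA.
Qed.

Lemma mx_nilpotentZ c N : mx_nilpotent N -> mx_nilpotent (c *: N).
Proof. by case=> m Nm; exists m; rewrite exprZmx Nm scaler0. Qed.

Lemma comm_invmx A B : GRing.comm A B -> GRing.comm A (invmx B).
Proof.
have [Bu AB | /invmx_out -> //] := boolP (B \in unitmx).
rewrite /GRing.comm -!mulmxE in AB *.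
by rewrite -[LHS](mulKmx Bu) (mulmxA B) -AB mulmxK.
Qed.

Lemma comm_scalar_addZ A B c d :
  GRing.comm A B -> GRing.comm A (c%:M + d *: B).
Proof.
rewrite /GRing.comm mulrDr mulrDl -!mulmxE scalar_mxC => AB.
by rewrite -scalemxAr -scalemxAl AB.
Qed.

Lemma mx_nilpotentM_comm N A :
  GRing.comm N A -> mx_nilpotent N -> mx_nilpotent (N *m A).
Proof.
by move=> NA [m Nm]; exists m; rewrite mulmxE exprMn_comm // Nm mul0r.
Qed.

Lemma mulmx_subr1_geom N m : N ^+ m = 0 -> (1%:M - N) *m \sum_(i < m) N ^+ i = 1%:M.
Proof. by move=> Nm; rewrite mulmxE -opprB mulNr -subrX1 Nm sub0r opprK. Qed.

Lemma invmx_subr1_nilpotent N :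
  mx_nilpotent N -> invmx (1%:M - N) = \sum_(i < n) N ^+ i.
Proof. by move/mx_nilpotent_pow_size/mulmx_subr1_geom/mulmx1_invmx. Qed.

Lemma scalar_addr_nilpotentE c N : c != 0 ->
  c%:M + N = c *: (1%:M - (- c^-1) *: N).
Proof. by move=> c0; rewrite scalerBr scalemx1 scalerA mulrN divff // scaleN1r opprK. Qed.

Lemma unitmx_scalar_addr_nilpotent c N :
  c != 0 -> mx_nilpotent N -> c%:M + N \in unitmx.
Proof.
move=> c0 /(mx_nilpotentZ (- c^-1))/mx_nilpotent_pow_size/mulmx_subr1_geom.
case/mulmx1_unit => Nu _.
by rewrite scalar_addr_nilpotentE // unitmxZ // unitfE.
Qed.

Lemma invmx_scalar_addr_nilpotent c N : c != 0 -> mx_nilpotent N ->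
  invmx (c%:M + N) = c^-1 *: \sum_(i < n) ((- c^-1) *: N) ^+ i.
Proof.
move=> c0 Nn; have cNu := unitmx_scalar_addr_nilpotent c0 Nn.
rewrite scalar_addr_nilpotentE // in cNu *.
by rewrite invmxZ // invmx_subr1_nilpotent //; apply: mx_nilpotentZ.
Qed.

End NilpotentMx.

Section PolyFun.
Variables (R : pzRingType) (n : nat).
Implicit Types (f h : 'M[R]_n -> R) (T U : 'M[R]_n -> 'M[R]_n).

Definition mx_polyfun T := forall i j, polyfun (fun x => T x i j).

Lemma polyfun_ext f h : f =1 h -> polyfun f -> polyfun h.
Proof. by move/functional_extensionality ->. Qed.

Lemma polyfun_sum (I : Type) (r : seq I) (f : I -> 'M[R]_n -> R) :
  (forall l, polyfun (f l)) -> polyfun (fun x => \sum_(l <- r) f l x).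
Proof.
move=> pf; elim: r => [|l r IHr].
  by apply: polyfun_ext (pf_const _ 0) => x; rewrite big_nil.
by apply: polyfun_ext (pf_add (pf l) IHr) => x; rewrite big_cons.
Qed.

Lemma mx_polyfun_ext T U : T =1 U -> mx_polyfun T -> mx_polyfun U.
Proof. by move=> TU pT i j; apply: polyfun_ext (pT i j) => x; rewrite TU. Qed.

Lemma mx_polyfun_id : mx_polyfun id.
Proof. exact: pf_coord. Qed.

Lemma mx_polyfun_cst C : mx_polyfun (fun=> C).
Proof. by move=> i j; apply: pf_const. Qed.

Lemma mx_polyfunD T U : mx_polyfun T -> mx_polyfun U -> mx_polyfun (fun x => T x + U x).
Proof.
by move=> pT pU i j; apply: polyfun_ext (pf_add (pT i j) (pU i j)) => x; rewrite mxE.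
Qed.

Lemma mx_polyfunM T U : mx_polyfun T -> mx_polyfun U -> mx_polyfun (fun x => T x *m U x).
Proof.
move=> pT pU i j; apply: polyfun_ext (polyfun_sum _ (fun l => pf_mul (pT i l) (pU l j))).
by move=> x; rewrite mxE.
Qed.

Lemma mx_polyfunZ c T : mx_polyfun T -> mx_polyfun (fun x => c *: T x).
Proof.
move=> pT; apply: mx_polyfun_ext (mx_polyfunM (mx_polyfun_cst c%:M) pT).
by move=> x; rewrite mul_scalar_mx.
Qed.

Lemma mx_polyfunX T m : mx_polyfun T -> mx_polyfun (fun x => T x ^+ m).
Proof.
move=> pT; elim: m => [|m IHm]; first exact: mx_polyfun_cst.
by apply: mx_polyfun_ext (mx_polyfunM pT IHm) => x; rewrite exprS mulmxE.
Qed.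

Lemma mx_polyfun_sum (I : Type) (r : seq I) (T : I -> 'M[R]_n -> 'M[R]_n) :
  (forall l, mx_polyfun (T l)) -> mx_polyfun (fun x => \sum_(l <- r) T l x).
Proof.
move=> pT; elim: r => [|l r IHr].
  by apply: mx_polyfun_ext (mx_polyfun_cst 0) => x; rewrite big_nil.
by apply: mx_polyfun_ext (mx_polyfunD (pT l) IHr) => x; rewrite big_cons.
Qed.

End PolyFun.

Definition cayley_mx (R : comUnitRingType) n (a b : R) (g : 'M[R]_n) : 'M[R]_n :=
  (g - 1%:M) *m invmx (a%:M - b *: g).

Definition cayley_inv_mx (R : comUnitRingType) n (a b : R) (x : 'M[R]_n) : 'M[R]_n :=
  invmx (1%:M + b *: x) *m (a *: x + 1%:M).

Section Cayley.
Variables (F : fieldType) (n : nat).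
Implicit Types (a b : F) (g h x : 'M[F]_n).

Lemma cayley_denE a b g : a%:M - b *: g = (a - b)%:M + (- b) *: (g - 1%:M).
Proof. by apply/matrixP => i j; rewrite !mxE; ring. Qed.

Lemma comm_cayley_den a b g : GRing.comm g (a%:M - b *: g).
Proof. by rewrite -scaleNr; apply/comm_scalar_addZ/commr_refl. Qed.

Lemma comm_subr1_cayley_den a b g : GRing.comm (g - 1%:M) (a%:M - b *: g).
Proof. by rewrite cayley_denE; apply/comm_scalar_addZ/commr_refl. Qed.

Lemma cayley_mxE a b g : cayley_mx a b g = invmx (a%:M - b *: g) *m (g - 1%:M).
Proof. exact/esym/commr_sym/comm_invmx/comm_subr1_cayley_den. Qed.

Lemma cayley_mx_conj a b h g : h \in unitmx ->
  cayley_mx a b (h *m g *m invmx h) = h *m cayley_mx a b g *m invmx h.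
Proof.
move=> hu; rewrite /cayley_mx.
have -> : h *m g *m invmx h - 1%:M = h *m (g - 1%:M) *m invmx h.
  by rewrite mulmxBr mulmxBl mulmx1 mulmxV.
have -> : a%:M - b *: (h *m g *m invmx h) = h *m (a%:M - b *: g) *m invmx h.
  rewrite mulmxBr mulmxBl mul_mx_scalar -scalemxAl mulmxV // scalemx1.
  by rewrite -scalemxAr -scalemxAl.
by rewrite invmx_conj // !mulmxA mulmxKV.
Qed.

Lemma cayley_mx_invmx a b g : g \in unitmx -> b%:M - a *: g \in unitmx ->
  cayley_mx a b (invmx g) = cayley_mx b a g.
Proof.
move=> gu Ku; rewrite /cayley_mx; set K := b%:M - a *: g.
have -> : invmx (a%:M - b *: invmx g) = - (invmx K *m g).
  apply: mulmx1_invmx; rewrite mulmxN -mulNmx mulmxA.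
  have -> : - (a%:M - b *: invmx g) = invmx g *m K.
    by rewrite mulmxBr mul_mx_scalar -scalemxAr mulVmx // scalemx1 opprB.
  by rewrite mulmxK // mulVmx.
have gK : g *m invmx K = invmx K *m g := comm_invmx (comm_cayley_den b a g).
rewrite -gK.
by rewrite mulmxN mulmxA -mulNmx mulmxBl mulVmx // mul1mx opprB.
Qed.

Lemma cayley_mx_nilpotent a b g :
  mx_nilpotent (g - 1%:M) -> mx_nilpotent (cayley_mx a b g).
Proof. exact/mx_nilpotentM_comm/comm_invmx/comm_subr1_cayley_den. Qed.

Lemma unitmx_cayley_inv_den b x : mx_nilpotent x -> 1%:M + b *: x \in unitmx.
Proof.
by move=> xn; apply: unitmx_scalar_addr_nilpotent (oner_neq0 _) (mx_nilpotentZ _ xn).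
Qed.

Lemma cayley_inv_mx_subr1 a b x : 1%:M + b *: x \in unitmx ->
  cayley_inv_mx a b x - 1%:M = ((a - b) *: x) *m invmx (1%:M + b *: x).
Proof.
move=> Pu; set P := 1%:M + b *: x.
have xP : GRing.comm x P by exact/comm_scalar_addZ/commr_refl.
have -> : ((a - b) *: x) *m invmx P = invmx P *m ((a - b) *: x).
  by rewrite -scalemxAl -scalemxAr !mulmxE (comm_invmx xP).
rewrite /cayley_inv_mx -[X in _ - X](mulVmx Pu) -mulmxBr; congr (_ *m _).
by apply/matrixP => i j; rewrite /P !mxE; ring.
Qed.

Lemma cayley_inv_mx_unipotent a b x :
  mx_nilpotent x -> mx_unipotent (cayley_inv_mx a b x).
Proof.
move=> xn; have Pu := unitmx_cayley_inv_den b xn; split.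
  by rewrite unitmx_mul unitmx_inv Pu addrC unitmx_cayley_inv_den.
rewrite cayley_inv_mx_subr1 //; apply: mx_nilpotentM_comm (mx_nilpotentZ _ xn).
apply/comm_invmx/comm_scalar_addZ.
by rewrite /GRing.comm -!mulmxE -scalemxAl -scalemxAr.
Qed.

Variables a b : F.
Hypothesis neq_ab : a != b.

Lemma unitmx_cayley_den g : mx_unipotent g -> a%:M - b *: g \in unitmx.
Proof.
case=> _ gn; rewrite cayley_denE unitmx_scalar_addr_nilpotent ?subr_eq0 //.
exact: mx_nilpotentZ.
Qed.

Lemma invmx_cayley_den g : mx_unipotent g -> invmx (a%:M - b *: g) =
  (a - b)^-1 *: \sum_(i < n) ((- (a - b)^-1) *: ((- b) *: (g - 1%:M))) ^+ i.
Proof.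
case=> _ gn; rewrite cayley_denE invmx_scalar_addr_nilpotent ?subr_eq0 //.
exact: mx_nilpotentZ.
Qed.

Lemma cayley_mxK g : mx_unipotent g -> cayley_inv_mx a b (cayley_mx a b g) = g.
Proof.
move=> gu; have Mu := unitmx_cayley_den gu; rewrite /cayley_inv_mx /cayley_mx.
set M := a%:M - b *: g in Mu *.
have ab0 : a - b != 0 by rewrite subr_eq0.
have -> : 1%:M + b *: ((g - 1%:M) *m invmx M) = (a - b) *: invmx M.
  rewrite -[X in X + _](mulmxV Mu) scalemxAl -mulmxDl -[(a - b) *: _]mul_scalar_mx.
  by congr (_ *m _); apply/matrixP => i j; rewrite /M !mxE; ring.
have -> : a *: ((g - 1%:M) *m invmx M) + 1%:M = ((a - b) *: g) *m invmx M.
  rewrite -[X in _ + X](mulmxV Mu) scalemxAl -mulmxDl.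
  by congr (_ *m _); apply/matrixP => i j; rewrite /M !mxE; ring.
rewrite invmxZ ?unitmxZ ?unitmx_inv ?unitfE // invmxK.
rewrite -!scalemxAl -scalemxAr scalerA mulVf // scale1r mulmxA.
have gM : g *m M = M *m g := comm_cayley_den a b g.
by rewrite -gM mulmxK.
Qed.

Lemma cayley_inv_mxK x : mx_nilpotent x -> cayley_mx a b (cayley_inv_mx a b x) = x.
Proof.
move=> xn; have Pu := unitmx_cayley_inv_den b xn; set P := 1%:M + b *: x in Pu *.
have ab0 : a - b != 0 by rewrite subr_eq0.
rewrite /cayley_mx cayley_inv_mx_subr1 //.
have -> : a%:M - b *: cayley_inv_mx a b x = (a - b) *: invmx P.
  rewrite /cayley_inv_mx scalemxAr -[a%:M](mulKmx Pu) -mulmxBr.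
  rewrite -[(a - b) *: _]mul_mx_scalar.
  congr (_ *m _); rewrite mul_mx_scalar.
  by apply/matrixP => i j; rewrite /P !mxE; ring.
rewrite invmxZ ?unitmxZ ?unitmx_inv ?unitfE // invmxK.
by rewrite -scalemxAr -!scalemxAl scalerA mulVf // scale1r mulmxKV.
Qed.

Lemma cayley_mx_polyfun : exists2 T : 'M[F]_n -> 'M[F]_n,
  mx_polyfun T & forall g, mx_unipotent g -> cayley_mx a b g = T g.
Proof.
have pgB1 : mx_polyfun (fun g : 'M[F]_n => g - 1%:M).
  exact: (mx_polyfunD (@mx_polyfun_id F n) (mx_polyfun_cst (- 1%:M))).
exists (fun g => (g - 1%:M) *m ((a - b)^-1 *:
  \sum_(i < n) ((- (a - b)^-1) *: ((- b) *: (g - 1%:M))) ^+ i)).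
  apply: (mx_polyfunM pgB1); apply/mx_polyfunZ/mx_polyfun_sum => i.
  exact/mx_polyfunX/mx_polyfunZ/mx_polyfunZ.
by move=> g gu; rewrite /cayley_mx invmx_cayley_den.
Qed.

End Cayley.

Section FrobeniusLie.
Variables (F : fieldType) (n q : nat).
Hypothesis q_pchar : [pchar F].-nat q.
Local Notation Fl := (@frob_lie F n q).
Implicit Types (A B : 'M[F]_n) (c : F).

Lemma expr0_pchar_nat : (0 : F) ^+ q = 0.
Proof. by rewrite expr0n; case/andP: q_pchar; case: q. Qed.

Lemma frob_lieB A B : Fl (A - B) = Fl A - Fl B.
Proof. by apply/matrixP => i j; rewrite !mxE exprDn_pchar // exprNn_pchar. Qed.

Lemma frob_lieZ c A : Fl (c *: A) = c ^+ q *: Fl A.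
Proof. by apply/matrixP => i j; rewrite !mxE exprMn. Qed.

Lemma frob_lie_scalar c : Fl c%:M = (c ^+ q)%:M.
Proof.
apply/matrixP => i j; rewrite !mxE (inj_eq rev_ord_inj) eq_sym.
by case: (i == j); rewrite ?expr0_pchar_nat.
Qed.

Lemma frob_lieM A B : Fl (A *m B) = Fl B *m Fl A.
Proof.
apply/matrixP => i j; rewrite !mxE.
rewrite (big_morph _ (fun x y => exprDn_pchar x y q_pchar) expr0_pchar_nat).
rewrite (reindex_inj rev_ord_inj); apply: eq_bigr => l _.
by rewrite !mxE exprMn mulrC.
Qed.

Lemma frob_lie_mulmxV A : A \in unitmx -> Fl A *m Fl (invmx A) = 1%:M.
Proof. by move=> Au; rewrite -frob_lieM mulVmx // frob_lie_scalar expr1n. Qed.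

Lemma frob_lie_invmx A : A \in unitmx -> Fl (invmx A) = invmx (Fl A).
Proof. by move/frob_lie_mulmxV/mulmx1_invmx. Qed.

Lemma frob_lie_unitmx A : A \in unitmx -> Fl A \in unitmx.
Proof. by move/frob_lie_mulmxV/mulmx1_unit=> []. Qed.

Lemma frob_lie_cayley_den a b g :
  Fl (a%:M - b *: g) = (a ^+ q)%:M - b ^+ q *: Fl g.
Proof. by rewrite frob_lieB frob_lie_scalar frob_lieZ. Qed.

Lemma frob_lie_cayley a b g : a%:M - b *: g \in unitmx ->
  Fl (cayley_mx a b g) = cayley_mx (a ^+ q) (b ^+ q) (Fl g).
Proof.
move=> Mu; rewrite cayley_mxE /cayley_mx frob_lieM frob_lie_invmx //.
by rewrite frob_lie_cayley_den frob_lieB frob_lie_scalar expr1n.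
Qed.

End FrobeniusLie.

Theorem mainTheorem2
  (k : closedFieldType) (p : nat) (hp : prime p) (hchar : p \in [pchar k])
  (e : nat) (he : (0 < e)%N) (n : nat) (alpha : k)
  (ha2 : alpha ^+ ((p ^ e) ^ 2) = alpha) (haq : alpha ^+ (p ^ e) != alpha) :
  let q := (p ^ e)%N in
  let s := @s_map k n q alpha in
  let sinv := @s_inv k n q alpha in
  (* s is well defined on G_uni and sinv on g_nil *)
  (forall g : 'M[k]_n, mx_unipotent g ->
      alpha%:M - (alpha ^+ q) *: g \in unitmx) /\
  (forall x : 'M[k]_n, mx_nilpotent x ->
      1%:M + (alpha ^+ q) *: x \in unitmx) /\
  (* s maps G_uni to g_nil, sinv maps g_nil to G_uni, mutually inverse *)
  (forall g : 'M[k]_n, mx_unipotent g -> mx_nilpotent (s g)) /\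
  (forall x : 'M[k]_n, mx_nilpotent x -> mx_unipotent (sinv x)) /\
  (forall g : 'M[k]_n, mx_unipotent g -> sinv (s g) = g) /\
  (forall x : 'M[k]_n, mx_nilpotent x -> s (sinv x) = x) /\
  (* G-equivariance *)
  (forall h g : 'M[k]_n, h \in unitmx -> mx_unipotent g ->
      s (h *m g *m invmx h) = h *m s g *m invmx h) /\
  (* s is a morphism of varieties *)
  (exists f : 'I_n -> 'I_n -> ('M[k]_n -> k),
      (forall i j, polyfun (f i j)) /\
      (forall g : 'M[k]_n, mx_unipotent g -> forall i j, s g i j = f i j g)) /\
  (* compatibility with Frobenius *)
  (forall g : 'M[k]_n, mx_unipotent g -> s (frob_grp q g) = frob_lie q (s g)).
Proof.
move=> q s sinv; set beta := alpha ^+ q.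
have -> : s = cayley_mx alpha beta by [].
have -> : sinv = cayley_inv_mx alpha beta by [].
have q_pchar : [pchar k].-nat q by rewrite pnatX (pnatE _ hp) hchar.
have neq_ab : alpha != beta by rewrite eq_sym.
have beta_frob : beta ^+ q = alpha by rewrite -exprM mulnn.
split; first exact: unitmx_cayley_den.
split; first exact: unitmx_cayley_inv_den.
split; first by move=> g [_]; apply: cayley_mx_nilpotent.
split; first exact: cayley_inv_mx_unipotent.
split; first exact: cayley_mxK.
split; first exact: cayley_inv_mxK.
split; first by move=> h g hu _; apply: cayley_mx_conj.
split.
  have [T pT sT] := cayley_mx_polyfun n neq_ab.
  by exists (fun i j g => T g i j); split => // g gu i j; rewrite sT.
move=> g gu; have den_unit := unitmx_cayley_den neq_ab gu.
have [g_unit _] := gu; rewrite /frob_grp.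
rewrite cayley_mx_invmx ?frob_lie_unitmx //; last first.
  by rewrite -beta_frob -frob_lie_cayley_den ?frob_lie_unitmx.
by rewrite frob_lie_cayley // beta_frob.
Qed.
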